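(* For every integer $n\geq 1$, $$c_n(231,321 : 231)=c_n(312,321 : 312)=F_n,$$ where $F_n$ is the $n$-th Fibonacci number, indexed by $F_1=1$, $F_2=2$, $F_n=F_{n-1}+F_{n-2}$ for $n\ge 3$.
   Context: $S_n$ is the symmetric group on $[n]=\{1,\dots,n\}$, and a permutation $\pi\in S_n$ is written in one-line notation $\pi=\pi_1\pi_2\cdots\pi_n$ with $\pi_i=\pi(i)$. For $\tau\in S_k$, $k\le n$, $\pi$ contains $\tau$ if there are indices $i_1<\dots<i_k$ with $\pi_{i_s}>\pi_{i_t}$ iff $\tau_s>\tau_t$ for all $1\le s<t\le k$; otherwise $\pi$ avoids $\tau$. $\pi^2$ denotes the composition $\pi\circ\pi$. For patterns $\sigma_1,\sigma_2,\rho$, $c_n(\sigma_1,\sigma_2 : \rho)$ denotes the number of permutations $\pi\in S_n$ such that $\pi$ avoids both $\sigma_1$ and $\sigma_2$ and $\pi^2$ avoids $\rho$. *)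

From mathcomp Require Import all_boot all_order all_fingroup.
Set Implicit Arguments. Unset Strict Implicit. Unset Printing Implicit Defensive.

(* A permutation pi of {1..n} is represented as s : 'S_n = {perm 'I_n}
   (values shifted by one: pi_(i+1) = s i + 1; this shift preserves order
   comparisons, so pattern containment is unaffected).
   A pattern tau in S_k is given in one-line notation as a sequence of
   naturals [:: tau_1; ...; tau_k]. *)

Definition contains (n : nat) (s : 'S_n) (tau : seq nat) : bool :=
  [exists f : {ffun 'I_(size tau) -> 'I_n},
    [forall a : 'I_(size tau), forall b : 'I_(size tau), (a < b)%N ==>
       ((f a < f b)%N &&
        ((s (f b) < s (f a))%N == (nth 0 tau b < nth 0 tau a)%N))]].

Definition avoids (n : nat) (s : 'S_n) (tau : seq nat) : bool :=
  ~~ contains s tau.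

Definition psquare (n : nat) (s : 'S_n) : 'S_n := (s * s)%g.

Definition c_count (n : nat) (sigma1 sigma2 rho : seq nat) : nat :=
  #|[set s : 'S_n | [&& avoids s sigma1, avoids s sigma2 & avoids (psquare s) rho]]|.

Fixpoint fibF (n : nat) : nat :=
  match n with
  | 0 => 1
  | 1 => 1
  | S ((S m) as p) => fibF p + fibF m
  end.

From mathcomp Require Import all_boot all_order all_fingroup.
From mathcomp Require Import zify.
Set Implicit Arguments. Unset Strict Implicit. Unset Printing Implicit Defensive.

(* Both sets counted are the permutations with |pi(i) - i| <= 1 for all i.
   Avoiding 231 and 321 means no entry lies below two earlier entries, which
   forces pi(i) >= i - 1. If moreover pi(i) >= i + 2, then, since the values
   below any m must sit at positions <= m, positions i + 1 and i + 2 carry the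
   values i and i + 1 and i < pi(pi(i)) < pi(i); so pi^2 contains 231 at
   positions i, i + 1, i + 2. Conversely such permutations are products of
   disjoint adjacent transpositions: they avoid 231, 312 and 321, and their
   square is the identity. They are counted by F_n, according to whether the
   last point is fixed or swapped with its predecessor. The case
   (312, 321 : 312) reduces to the first one by inverting the permutation. *)

Lemma nat_ind2 (P : nat -> Prop) :
  P 0 -> P 1 -> (forall m, P m -> P m.+1 -> P m.+2) -> forall m, P m.
Proof.
move=> P0 P1 IH m; suff [] : P m /\ P m.+1 by [].
by elim: m => [|m [Pm Pm1]]; split => //; apply: IH.
Qed.

Definition adj_invol_seq m (t : seq nat) := size t = m /\ forall k, k < m ->
  [/\ nth 0 t k <= k.+1, k <= (nth 0 t k).+1, nth 0 t k < m & nth 0 t (nth 0 t k) = k].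

Fixpoint adj_invols m : seq (seq nat) :=
  match m with
  | 0 => [:: [::]]
  | 1 => [:: [:: 0]]
  | (p.+1 as m').+1 =>
      [seq rcons t m' | t <- adj_invols m'] ++ [seq rcons (rcons t m') p | t <- adj_invols p]
  end.

Lemma size_adj_invols m : size (adj_invols m) = fibF m.
Proof. by elim/nat_ind2: m => // m IH0 IH1; rewrite /= size_cat !size_map IH0 IH1 addnC. Qed.

Lemma adj_invol_seq_rcons m t : adj_invol_seq m.+1 t -> adj_invol_seq m.+2 (rcons t m.+1).
Proof.
move=> [size_t t_adj]; split => [|k lt_k]; first by rewrite size_rcons size_t.
rewrite !nth_rcons size_t; case: (ltnP k m.+1) => [lt_km | le_mk].
  by have [? ? lt_tk ->] := t_adj k lt_km; rewrite lt_tk; split => //; lia.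
have -> : k = m.+1 by lia.
by rewrite eqxx ltnn eqxx.
Qed.

Lemma adj_invol_seq_rcons_swap m t :
  adj_invol_seq m t -> adj_invol_seq m.+2 (rcons (rcons t m.+1) m).
Proof.
move=> [size_t t_adj]; split => [|k lt_k]; first by rewrite !size_rcons size_t.
rewrite !nth_rcons size_rcons size_t; case: (ltnP k m) => [lt_km | le_mk].
  have [? ? lt_tk inv_k] := t_adj k lt_km.
  by rewrite !ltnS (ltnW lt_km) lt_tk (ltnW lt_tk) inv_k; split => //; lia.
have [->|->] : k = m \/ k = m.+1 by lia.
  by rewrite ltnSn eqxx /= ltnn eqxx; split => //; lia.
by rewrite ltnn eqxx ltnSn ltnn eqxx; split => //; lia.
Qed.

Lemma adj_invol_seq_take m k t : adj_invol_seq m t -> k <= m ->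
  (forall j, j < k -> nth 0 t j < k) -> adj_invol_seq k (take k t).
Proof.
move=> [size_t t_adj] le_km t_lt; split => [|j lt_jk]; first by rewrite size_takel ?size_t.
have lt_tj := t_lt j lt_jk; have [? ? _ ?] := t_adj j (leq_trans lt_jk le_km).
by rewrite !nth_take.
Qed.

Lemma adj_invol_seq_last m t : adj_invol_seq m.+2 t ->
  (exists2 t', adj_invol_seq m.+1 t' & t = rcons t' m.+1) \/
  (exists2 t', adj_invol_seq m t' & t = rcons (rcons t' m.+1) m).
Proof.
move=> t_adj; have [size_t t_nth] := t_adj.
have take_rcons k : k < m.+2 -> take k.+1 t = rcons (take k t) (nth 0 t k).
  by move=> lt_k; rewrite (take_nth 0) ?size_t.
have t_take : t = take m.+2 t by rewrite -size_t take_size.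
have [_ ge_last lt_last inv_last] := t_nth m.+1 (ltnSn _).
have [t_last | t_last] : nth 0 t m.+1 = m.+1 \/ nth 0 t m.+1 = m by lia.
- left; exists (take m.+1 t); last by rewrite {1}t_take take_rcons // t_last.
  apply: (adj_invol_seq_take t_adj (leqnSn _)) => j lt_j.
  have [le_tj _ _ inv_j] := t_nth j (ltnW lt_j).
  suff : nth 0 t j != m.+1 by lia.
  by apply/eqP => t_j; move: inv_j; rewrite t_j t_last; lia.
- right; exists (take m t).
    apply: (adj_invol_seq_take t_adj (leqW (leqnSn _))) => j lt_j.
    have [le_tj _ _ inv_j] := t_nth j (leq_trans lt_j (leqW (leqnSn _))).
    suff : nth 0 t j != m by lia.
    by apply/eqP => t_j; move: inv_j inv_last; rewrite t_j t_last; lia.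
  move: inv_last; rewrite t_last => t_m.
  by rewrite {1}t_take !take_rcons // t_m t_last.
Qed.

Lemma mem_adj_invols m t : t \in adj_invols m <-> adj_invol_seq m t.
Proof.
elim/nat_ind2: m t => [t | t | m IH0 IH1 t].
- rewrite inE; split => [/eqP -> // | [/size0nil -> _] //].
- rewrite inE; split => [/eqP -> | [size_t t_adj]]; first by split => // -[].
  have [_ _ lt_t0 _] := t_adj 0 isT; clear t_adj.
  by case: t size_t lt_t0 => [|x []] //= _; rewrite ltnS leqn0 => /eqP ->.
rewrite mem_cat; split.
  case/orP => /mapP[t' t'_in ->]; first exact/adj_invol_seq_rcons/IH1.
  exact/adj_invol_seq_rcons_swap/IH0.
case/adj_invol_seq_last => -[t' t'_adj ->]; apply/orP.
  by left; apply/map_f/IH1.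
by right; apply/map_f/IH0.
Qed.

Lemma uniq_adj_invols m : uniq (adj_invols m).
Proof.
elim/nat_ind2: m => // m IH0 IH1.
rewrite [adj_invols _]/= cat_uniq !map_inj_uniq ?IH0 ?IH1 ?andbT /=.
- apply/hasPn => x /mapP[t _ ->]; apply/mapP => -[t' _ eq_t].
  by have := congr1 (last 0) eq_t; rewrite !last_rcons; lia.
- by move=> t t' /= /(rcons_injl m) /(rcons_injl m.+1).
- exact: (rcons_injl m.+1).
Qed.

Section Permutations.

Variable n : nat.
Implicit Types (s : 'S_n) (a b c i p q : 'I_n).

Lemma contains3P s x y z :
  reflect (exists a b c : 'I_n, [/\ a < b, b < c, (s b < s a) = (y < x),
                                    (s c < s a) = (z < x) & (s c < s b) = (z < y)])
          (contains s [:: x; y; z]).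
Proof.
apply: (iffP existsP) => [[f /forallP inc] | [a [b [c [ab bc ba ca cb]]]]].
  pose f_ k (lt_k3 : k < 3) := f (Ordinal lt_k3).
  have inc_at k l (lt_k3 : k < 3) (lt_l3 : l < 3) :=
    implyP (forallP (inc (Ordinal lt_k3)) (Ordinal lt_l3)).
  have /andP[lt01 /eqP eq01] := inc_at 0 1 isT isT isT.
  have /andP[lt02 /eqP eq02] := inc_at 0 2 isT isT isT.
  have /andP[lt12 /eqP eq12] := inc_at 1 2 isT isT isT.
  by exists (f_ 0 isT), (f_ 1 isT), (f_ 2 isT).
exists [ffun k : 'I_3 => nth a [:: a; b; c] k].
apply/forallP => -[[|[|[|k]]] lt_k3] //; apply/forallP => -[[|[|[|l]]] lt_l3] //=;
  by rewrite !ffunE /= ?ab ?bc ?(ltn_trans ab bc) ?ba ?ca ?cb ?eqxx.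
Qed.

Lemma perm_val_eq s a b : (s a == s b :> nat) = (a == b :> nat).
Proof. by rewrite !val_eqE (inj_eq perm_inj). Qed.

Definition drops_le1 s := forall i, i <= (s i).+1.

Definition moves_le1 s := forall i, s i <= i.+1 /\ i <= (s i).+1.

Lemma card_ord_ltn k : k <= n -> #|[set p : 'I_n | p < k]| = k.
Proof.
move=> le_kn; have widen_inj : injective (widen_ord le_kn).
  by move=> p q /(congr1 val) /= /val_inj.
rewrite -[RHS]card_ord -(card_imset _ widen_inj).
apply: eq_card => p; rewrite inE; apply/idP/imsetP => [lt_pk | [q _ ->] /=].
  by exists (Ordinal lt_pk) => //; apply: val_inj.
exact: ltn_ord.
Qed.

(* If s q >= m for some q <= m, the m values below m must fill the m positions
   of [0, m] other than q, since s drops by at most one. *)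
Lemma drops_le1_ltn s m q p :
  drops_le1 s -> q <= m <= s q -> p <= m -> p != q :> nat -> s p < m.
Proof.
move=> drop_s /andP[le_qm le_msq] le_pm ne_pq.
have lt_mn : m < n := leq_ltn_trans le_msq (ltn_ord _).
set A := s @^-1: [set v : 'I_n | v < m].
set B := [set r : 'I_n | r < m.+1] :\ q.
have sub_AB : A \subset B.
  apply/subsetP => r; rewrite !inE -val_eqE /= ltnS => lt_srm.
  have := drop_s r; have := perm_val_eq s r q; lia.
have card_B : #|B| = m.
  have := cardsD1 q [set r : 'I_n | r < m.+1].
  by rewrite inE ltnS le_qm card_ord_ltn // add1n => -[].
have /eqP eq_AB : A == B.
  rewrite eqEcard sub_AB card_B card_preimset; last exact: perm_inj.
  by rewrite card_ord_ltn ?leqnn // ltnW.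
have : p \in B by rewrite !inE ne_pq ltnS le_pm.
by rewrite -eq_AB !inE.
Qed.

Lemma no_valley_drops_le1 s :
  (forall a b c, a < b -> b < c -> s c < s a -> s c < s b -> False) -> drops_le1 s.
Proof.
move=> no_valley c; rewrite leqNgt; apply/negP => lt_sc_c.
set C := [set p : 'I_n | (p < c) && (s c < s p)].
have : c <= #|C| + s c.
  set V := [set v : 'I_n | v < s c].
  have card_V : #|s @^-1: V| = s c.
    by rewrite card_preimset ?card_ord_ltn 1?ltnW //; exact: perm_inj.
  rewrite -{1}(card_ord_ltn (ltnW (ltn_ord c))) -card_V.
  apply: leq_trans (leq_card_setU _ _); apply: subset_leq_card.
  apply/subsetP => p; rewrite !inE => lt_pc.
  by have := perm_val_eq s p c; rewrite lt_pc /=; lia.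
move=> le_c; have /card_gt1P[a [b [aC bC ne_ab]]] : 1 < #|C| by lia.
move: aC bC; rewrite !inE => /andP[ac sca] /andP[bc scb].
case: (ltngtP a b) => [ab | ba | /val_inj eq_ab]; last by rewrite eq_ab eqxx in ne_ab.
- exact: no_valley ab bc sca scb.
- exact: no_valley ba ac scb sca.
Qed.

Lemma psquare_contains_231 s i :
  drops_le1 s -> i.+2 <= s i -> contains (psquare s) [:: 2; 3; 1].
Proof.
move=> drop_s le_i2_si.
have ltn_s := drops_le1_ltn drop_s.
set p1 := (s^-1)%g i; set p2 := (s^-1)%g p1.
have s_p1 : s p1 = i by rewrite permKV.
have s_p2 : s p2 = p1 by rewrite permKV.
have p1_val : p1 = i.+1 :> nat.
  have := ltn_s i i p1; have := drop_s p1; have := perm_val_eq s p1 i.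
  rewrite s_p1; lia.
have p2_val : p2 = i.+2 :> nat.
  have := ltn_s i.+1 i p2; have := drop_s p2; have := perm_val_eq s p2 i.
  rewrite s_p2 p1_val; lia.
apply/contains3P; exists i, p1, p2.
have := ltn_s (s i) i (s i); have := drop_s (s i).
rewrite /psquare !permM s_p2 s_p1 p1_val p2_val /= => drop_si ltn_ssi; split; lia.
Qed.

Lemma moves_le1_drops s : moves_le1 s -> drops_le1 s.
Proof. by move=> mv_s i; case: (mv_s i). Qed.

Lemma moves_le1V s : moves_le1 s -> moves_le1 s^-1.
Proof. by move=> mv_s i; have := mv_s ((s^-1)%g i); rewrite permKV; lia. Qed.

Lemma moves_le1_invol s : moves_le1 s -> forall i, s (s i) = i.
Proof.
have up_invol (t : 'S_n) i : moves_le1 t -> t i = i.+1 :> nat -> t (t i) = i.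
  move=> mv_t ti; apply: val_inj => /=.
  have := drops_le1_ltn (moves_le1_drops mv_t) (m := i.+1) (q := i) (p := t i).
  have := mv_t (t i); have := perm_val_eq t (t i) i; rewrite ti; lia.
move=> mv_s i; have [le_si ge_si] := mv_s i.
case: (ltngtP (s i) i) => [lt_si_i | gt_si_i | /val_inj si_i]; last by rewrite !si_i.
- have ssi : (s^-1)%g (s i) = (s i).+1 :> nat by rewrite permK; lia.
  have := up_invol _ _ (moves_le1V mv_s) ssi; rewrite permK => <-.
  by rewrite permKV.
- by apply: up_invol mv_s _; lia.
Qed.

Lemma moves_le1_inversion s a b : moves_le1 s -> a < b -> s b < s a ->
  b = a.+1 :> nat /\ s a = b :> nat /\ s b = a :> nat.
Proof. by move=> mv_s; have := mv_s a; have := mv_s b; lia. Qed.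

Lemma moves_le1_avoids s : moves_le1 s ->
  [&& avoids s [:: 2; 3; 1], avoids s [:: 3; 2; 1] & avoids s [:: 3; 1; 2]].
Proof.
move=> mv_s; rewrite /avoids -!negb_or; apply/negP.
case/or3P => /contains3P[a [b [c [ab bc /= ba ca cb]]]];
  have ac := ltn_trans ab bc; have inv := moves_le1_inversion mv_s.
- by have := inv _ _ ac; have := inv _ _ bc; lia.
- by have := inv _ _ ab; have := inv _ _ bc; lia.
- by have := inv _ _ ac; have := inv _ _ ab; lia.
Qed.

Lemma moves_le1_psquare s : moves_le1 s -> psquare s = 1%g.
Proof. by move=> mv_s; apply/permP => i; rewrite /psquare permM perm1 moves_le1_invol. Qed.

Lemma perm1_contains3 x y z : contains (1%g : 'S_n) [:: x; y; z] -> x <= y <= z.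
Proof. by case/contains3P => a [b [c [ab bc]]]; rewrite !perm1; lia. Qed.

Lemma avoids_231_321_sq231P s :
  reflect (moves_le1 s)
    [&& avoids s [:: 2; 3; 1], avoids s [:: 3; 2; 1] & avoids (psquare s) [:: 2; 3; 1]].
Proof.
apply: (iffP and3P) => [[/negP av231 /negP av321 /negP av_sq] | mv_s].
  have drop_s : drops_le1 s.
    apply: no_valley_drops_le1 => a b c ab bc sca scb.
    have := perm_val_eq s a b; case: (ltngtP (s a) (s b)) => [sab | sba | e_sab] eq_ab.
    - by apply: av231; apply/contains3P; exists a, b, c; split => //=; lia.
    - by apply: av321; apply/contains3P; exists a, b, c; split => //=; lia.
    - by move: eq_ab; lia.
  move=> i; split; last exact: drop_s.
  by rewrite leqNgt; apply/negP => /(psquare_contains_231 drop_s).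
have /and3P[av231 av321 _] := moves_le1_avoids mv_s; split => //.
by rewrite moves_le1_psquare //; apply/negP => /perm1_contains3.
Qed.

Lemma contains231V s : contains s^-1 [:: 2; 3; 1] -> contains s [:: 3; 1; 2].
Proof.
case/contains3P => a [b [c [ab bc /= ba ca cb]]].
apply/contains3P; exists ((s^-1)%g c), ((s^-1)%g a), ((s^-1)%g b).
have := perm_val_eq s^-1 a b; rewrite !permKV /=; split; lia.
Qed.

Lemma contains321V s : contains s^-1 [:: 3; 2; 1] -> contains s [:: 3; 2; 1].
Proof.
case/contains3P => a [b [c [ab bc /= ba ca cb]]].
apply/contains3P; exists ((s^-1)%g c), ((s^-1)%g b), ((s^-1)%g a).
by rewrite !permKV /=; split; lia.
Qed.

Lemma psquareV s : psquare s^-1 = (psquare s)^-1%g.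
Proof. by rewrite /psquare invMg. Qed.

Lemma avoids_312_321_sq312P s :
  reflect (moves_le1 s)
    [&& avoids s [:: 3; 1; 2], avoids s [:: 3; 2; 1] & avoids (psquare s) [:: 3; 1; 2]].
Proof.
apply: (iffP and3P) => [[av312 av321 av_sq] | mv_s].
  rewrite -[s]invgK; apply/moves_le1V/avoids_231_321_sq231P.
  by rewrite /avoids psquareV (contra (@contains231V _) av312)
    (contra (@contains321V _) av321) (contra (@contains231V _) av_sq).
have /and3P[_ av321 av312] := moves_le1_avoids mv_s; split => //.
by rewrite moves_le1_psquare //; apply/negP => /perm1_contains3.
Qed.

Definition oneline s : seq nat := [seq nat_of_ord (s i) | i <- enum 'I_n].

Lemma size_oneline s : size (oneline s) = n.
Proof. by rewrite size_map size_enum_ord. Qed.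

Lemma nth_oneline s i : nth 0 (oneline s) i = s i.
Proof. by rewrite (nth_map i) ?size_enum_ord // nth_ord_enum. Qed.

Lemma oneline_inj : injective oneline.
Proof.
by move=> s s' eq_ss'; apply/permP => i; apply: val_inj; rewrite /= -!nth_oneline eq_ss'.
Qed.

Lemma moves_le1_oneline s : moves_le1 s -> adj_invol_seq n (oneline s).
Proof.
move=> mv_s; split => [|k lt_kn]; first exact: size_oneline.
pose i := Ordinal lt_kn; rewrite -[k]/(nat_of_ord i) !nth_oneline moves_le1_invol //.
by have [? ?] := mv_s i; split.
Qed.

Lemma adj_invol_seq_oneline t :
  adj_invol_seq n t -> exists2 s, moves_le1 s & oneline s = t.
Proof.
move=> [size_t t_adj].
have t_lt i : nth 0 t i < n by have [_ _ ->] := t_adj i (ltn_ord i).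
pose f i := Ordinal (t_lt i).
have f_inj : injective f.
  move=> i j /(congr1 val) /= eq_ij; apply: val_inj.
  have [_ _ _ inv_i] := t_adj i (ltn_ord i); have [_ _ _ inv_j] := t_adj j (ltn_ord j).
  by rewrite /= -inv_i -inv_j eq_ij.
exists (perm f_inj).
  by move=> i; rewrite permE /=; have [? ? _ _] := t_adj i (ltn_ord i).
apply: (@eq_from_nth _ 0); rewrite size_oneline ?size_t // => k lt_kn.
by rewrite -[k]/(nat_of_ord (Ordinal lt_kn)) nth_oneline permE.
Qed.

Lemma card_moves_le1 (A : {set 'S_n}) :
  (forall s, reflect (moves_le1 s) (s \in A)) -> #|A| = fibF n.
Proof.
move=> AP; rewrite cardE -(size_map oneline) -size_adj_invols.
apply/perm_size/uniq_perm.
- by rewrite (map_inj_uniq oneline_inj) enum_uniq.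
- exact: uniq_adj_invols.
move=> t; apply/mapP/idP => [[s s_in ->] | /mem_adj_invols /adj_invol_seq_oneline[s mv_s <-]].
  by apply/mem_adj_invols/moves_le1_oneline/AP; rewrite -mem_enum.
by exists s; rewrite // mem_enum; apply/AP.
Qed.

End Permutations.

Theorem theorem3p2 (n : nat) : (1 <= n)%N ->
  c_count n [:: 2; 3; 1] [:: 3; 2; 1] [:: 2; 3; 1] = fibF n /\
  c_count n [:: 3; 1; 2] [:: 3; 2; 1] [:: 3; 1; 2] = fibF n.
Proof.
move=> _; split; apply: card_moves_le1 => s; rewrite inE.
  exact: avoids_231_321_sq231P.
exact: avoids_312_321_sq312P.
Qed.
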